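(* Let $S$ be a densely defined symmetric operator on a Hilbert space $\mathcal{H}$ and $V\ge0$ a bounded everywhere defined non-negative operator. Let $\mathcal{V}\subset\mathcal{D}(S^* )$ be a subspace with $\mathcal{V}\cap\mathcal{D}(S)=\{0\}$, let $\mathcal{L}:\mathcal{V}\to\mathcal{H}$ be linear, let $S_{\mathcal{V},\mathcal{L}}$ be the operator with domain $\mathcal{D}(S)\dot{+}\mathcal{V}$ acting by $f+v\mapsto S^*(f+v)+\mathcal{L}v$, and let $S_{\mathcal{V}}:=S_{\mathcal{V},0}=S^*\upharpoonright_{\mathcal{D}(S)\dot{+}\mathcal{V}}$. (i) If $S_{\mathcal{V}}$ is symmetric, then $S_{\mathcal{V}}+iV$ is the only dissipative extension of $S+iV$ with domain equal to $\mathcal{D}(S_{\mathcal{V}})$. Moreover, if $\mathcal{L}\neq0$, there is no $\gamma\in\mathbb{R}^+$ such that $\mathrm{Im}\langle\psi,(S_{\mathcal{V},\mathcal{L}}+iV)\psi\rangle\ge-\gamma\|\psi\|^2$ for all $\psi\in\mathcal{D}(S_{\mathcal{V},\mathcal{L}})$. (ii) If there exists $v\in\mathcal{V}$ with $\mathrm{Im}\langle v,S_{\mathcal{V}}v\rangle<0$, then there exists no linear $\mathcal{L}:\mathcal{V}\to\mathcal{H}$ and no bounded non-negative operator $V\ge0$ such that $S_{\mathcal{V},\mathcal{L}}+iV$ is dissipative. (iii) If there exists $\varepsilon>0$ such that $\mathrm{Im}\langle v,S_{\mathcal{V}}v\rangle\ge\varepsilon\|v\|^2$ for all $v\in\mathcal{V}$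 and $\mathcal{L}$ is bounded, then $$\mathrm{Im}\langle\psi,S_{\mathcal{V},\mathcal{L}}\psi\rangle\ge-\frac{\|\mathcal{L}\|^2}{4\varepsilon}\|\psi\|^2\quad\text{for all }\psi\in\mathcal{D}(S_{\mathcal{V},\mathcal{L}}).$$ In particular, for any bounded $V\ge\frac{\|\mathcal{L}\|^2}{4\varepsilon}$ we get $\mathrm{Im}\langle\psi,(S_{\mathcal{V},\mathcal{L}}+iV)\psi\rangle\ge0$ for all $\psi\in\mathcal{D}(S_{\mathcal{V},\mathcal{L}})$.
   Context: The inner product is antilinear in the first argument. A densely defined operator $B$ is dissipative if $\mathrm{Im}\langle\psi,B\psi\rangle\ge0$ for all $\psi\in\mathcal{D}(B)$. An extension of $S+iV$ means an operator extending $S+iV$ defined on $\mathcal{D}(S)$. *)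

From HB Require Import structures.
From mathcomp Require Import all_boot all_order all_algebra.
From mathcomp Require Import boolp classical_sets reals.
From mathcomp Require Import complex.
Set Implicit Arguments. Unset Strict Implicit. Unset Printing Implicit Defensive.
Import Order.TTheory GRing.Theory Num.Theory.
Local Open Scope ring_scope.
Local Open Scope classical_set_scope.

Section Hilbert.
Variable R : realType.
Local Notation C := R[i].
Variable H : lmodType C.
Variable inner : H -> H -> C.  (* antilinear in 1st argument, linear in 2nd *)

Definition h_hnorm (x : H) : R := Num.sqrt (complex.Re (inner x x)).

Definition h_is_hilbert : Prop :=
  [/\ (forall x y z (a : C), inner x (a *: y + z) = a * inner x y + inner x z),
      (forall x y, inner y x = conjc (inner x y)),
      (forall x, 0 <= inner x x),
      (forall x, inner x x = 0 -> x = 0) &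
      (forall u : nat -> H,
         (forall e : R, 0 < e -> exists N, forall m n, (N <= m)%N -> (N <= n)%N ->
              h_hnorm (u m - u n) < e) ->
         exists l, forall e : R, 0 < e -> exists N, forall n, (N <= n)%N ->
              h_hnorm (u n - l) < e)].

Definition h_subspace (D : set H) : Prop :=
  D 0 /\ forall (a : C) x y, D x -> D y -> D (a *: x + y).

Definition h_linear_on (D : set H) (T : H -> H) : Prop :=
  forall (a : C) x y, D x -> D y -> T (a *: x + y) = a *: T x + T y.

Definition h_dense (D : set H) : Prop :=
  forall x (e : R), 0 < e -> exists y, D y /\ h_hnorm (x - y) < e.

Definition h_densely_defined (D : set H) (T : H -> H) : Prop :=
  [/\ h_subspace D, h_linear_on D T & h_dense D].

Definition h_symmetric (D : set H) (T : H -> H) : Prop :=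
  forall x y, D x -> D y -> inner (T x) y = inner x (T y).

Definition h_adj_dom (D : set H) (T : H -> H) : set H :=
  [set g | exists h, forall f, D f -> inner g (T f) = inner h f].
Definition h_adj (D : set H) (T : H -> H) (g : H) : H :=
  xget 0 [set h | forall f, D f -> inner g (T f) = inner h f].

Definition h_dsum (D Vs : set H) : set H :=
  [set x | exists f v, D f /\ Vs v /\ x = f + v].

Definition h_vpart (D Vs : set H) (x : H) : H :=
  xget 0 [set v | Vs v /\ D (x - v)].

Definition h_S_VL (D : set H) (S : H -> H) (Vs : set H) (L : H -> H) (x : H) : H :=
  h_adj D S x + L (h_vpart D Vs x).

Definition h_S_V (D : set H) (S : H -> H) (Vs : set H) (x : H) : H :=
  h_S_VL D S Vs (fun _ => 0) x.

Definition h_plus_iV (T W : H -> H) (x : H) : H := T x + (@Complex R 0 1) *: W x.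

Definition h_dissipative (D : set H) (B : H -> H) : Prop :=
  forall psi, D psi -> 0 <= complex.Im (inner psi (B psi)).

Definition h_bounded_op (W : H -> H) : Prop :=
  h_linear_on setT W /\ exists M : R, forall x, h_hnorm (W x) <= M * h_hnorm x.

Definition h_op_ge (W : H -> H) (c : R) : Prop :=
  forall x, (c * h_hnorm x ^+ 2)%:C%C <= inner x (W x).

Definition h_bounded_on (Vs : set H) (L : H -> H) : Prop :=
  exists M : R, forall v, Vs v -> h_hnorm (L v) <= M * h_hnorm v.
Definition h_opnorm_on (Vs : set H) (L : H -> H) : R :=
  sup [set h_hnorm (L v) | v in [set v | Vs v /\ h_hnorm v <= 1]].

End Hilbert.

From HB Require Import structures.
From mathcomp Require Import all_boot all_order all_algebra.
From mathcomp Require Import boolp classical_sets reals.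
From mathcomp Require Import complex.
From mathcomp Require Import ring lra.
Import Order.TTheory GRing.Theory Num.Theory.
Local Open Scope ring_scope.
Local Open Scope classical_set_scope.
Local Open Scope complex_scope.
Set Implicit Arguments. Unset Strict Implicit.

(* For psi = f + v with f in D(S) and v in 𝒱, symmetry of S gives
   Im<psi, S^* psi> = Im<v, S^* v>, hence
     Im<psi, (S_{𝒱,ℒ} + iV) psi> = Im<v, S^* v> + Im<psi, ℒv> + Re<psi, V psi>
                                 <= Im<v, S^* v> + Im<psi, ℒv> + ‖V‖ ‖psi‖^2.
   As f varies, psi runs through the dense set D(S) + v, and a lower bound
   0 <= Im<psi, u> + K ‖psi‖^2 + b valid there extends to all of ℋ by continuity.
   At psi = 0 it forces b >= 0, which gives (ii); at psi = i t u with t > 0 small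
   it forces u = 0, which gives (i) for u = ℒv and for the defect
   u = Bv - (S^* v + iVv) of a dissipative extension B.  Part (iii) is
   Cauchy-Schwarz, Im<psi, ℒv> >= -‖psi‖ ‖ℒ‖ ‖v‖, followed by completing the
   square against eps ‖v‖^2. *)

Local Notation Re := complex.Re.
Local Notation Im := complex.Im.

Section ComplexParts.
Variable R : rcfType.
Implicit Types (r : R) (z w : R[i]).

Lemma ReD z w : Re (z + w) = Re z + Re w. Proof. by case: z => ? ?; case: w. Qed.
Lemma ImD z w : Im (z + w) = Im z + Im w. Proof. by case: z => ? ?; case: w. Qed.
Lemma ReN z : Re (- z) = - Re z. Proof. by case: z. Qed.
Lemma ImN z : Im (- z) = - Im z. Proof. by case: z. Qed.
Lemma Re_conj z : Re z^* = Re z. Proof. by case: z. Qed.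
Lemma Im_conj z : Im z^* = - Im z. Proof. by case: z. Qed.
Lemma Re_iM z : Re ('i * z) = - Im z. Proof. by rewrite mulrC ReiNIm. Qed.
Lemma Im_iM z : Im ('i * z) = Re z. Proof. by rewrite mulrC ImiRe. Qed.
Lemma Re_realM r z : Re (r%:C * z) = r * Re z. Proof. by case: z => a b /=; simpc. Qed.

Lemma conjcM_self z : z^* * z = (Re z ^+ 2 + Im z ^+ 2)%:C.
Proof. by rewrite mulrC -sqr_normc add_Re2_Im2. Qed.

End ComplexParts.

Section Subspaces.
Variables (R : realType) (H : lmodType R[i]).
Implicit Types (D : set H) (T : H -> H).

Lemma subspaceD D x y : h_subspace D -> D x -> D y -> D (x + y).
Proof. by move=> [_ hD] Dx Dy; have := hD 1 x y Dx Dy; rewrite scale1r. Qed.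

Lemma subspaceZ D a x : h_subspace D -> D x -> D (a *: x).
Proof. by move=> [D0 hD] Dx; have := hD a x 0 Dx D0; rewrite addr0. Qed.

Lemma subspaceB D x y : h_subspace D -> D x -> D y -> D (x - y).
Proof. by move=> hD Dx Dy; rewrite -scaleN1r; apply: subspaceD; last exact: subspaceZ. Qed.

Lemma linear_onD D T x y : h_linear_on D T -> D x -> D y -> T (x + y) = T x + T y.
Proof. by move=> hT Dx Dy; have := hT 1 x y Dx Dy; rewrite !scale1r. Qed.

Lemma linear_on0 D T : h_subspace D -> h_linear_on D T -> T 0 = 0.
Proof.
move=> [D0 _] hT; apply: (@addrI _ (T 0)).
by rewrite addr0 -(linear_onD hT D0 D0) addr0.
Qed.

Lemma linear_onZ D T a x : h_subspace D -> h_linear_on D T -> D x -> T (a *: x) = a *: T x.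
Proof.
move=> hD hT Dx; have := hT a x 0 Dx (proj1 hD).
by rewrite !addr0 (linear_on0 hD hT) addr0.
Qed.

End Subspaces.

Section InnerProduct.
Variables (R : realType) (H : lmodType R[i]) (inner : H -> H -> R[i]).
Hypothesis hilbert : h_is_hilbert inner.
Local Notation hn := (h_hnorm inner).
Implicit Types (x y z u : H) (a c : R[i]).

Lemma inner_linear x y z a : inner x (a *: y + z) = a * inner x y + inner x z.
Proof. by case: hilbert. Qed.

Lemma inner_conjC x y : inner y x = (inner x y)^*.
Proof. by case: hilbert. Qed.

Lemma inner_self_ge0 x : 0 <= inner x x.
Proof. by case: hilbert. Qed.

Lemma inner_self_eq0 x : inner x x = 0 -> x = 0.
Proof. by case: hilbert => _ _ _ /(_ x). Qed.

Lemma innerDr x y z : inner x (y + z) = inner x y + inner x z.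
Proof. by have := inner_linear x y z 1; rewrite scale1r mul1r. Qed.

Lemma inner0r x : inner x 0 = 0.
Proof. by apply: (@addrI _ (inner x 0)); rewrite -innerDr !addr0. Qed.

Lemma innerZr x a y : inner x (a *: y) = a * inner x y.
Proof. by rewrite -[a *: y]addr0 inner_linear inner0r addr0. Qed.

Lemma innerNr x y : inner x (- y) = - inner x y.
Proof. by rewrite -scaleN1r innerZr mulN1r. Qed.

Lemma innerDl x y z : inner (x + y) z = inner x z + inner y z.
Proof. by rewrite inner_conjC innerDr rmorphD /= -!inner_conjC. Qed.

Lemma innerZl a x y : inner (a *: x) y = a^* * inner x y.
Proof. by rewrite inner_conjC innerZr rmorphM /= -inner_conjC. Qed.

Lemma innerZl_real (r : R) x y : inner (r%:C *: x) y = r%:C * inner x y.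
Proof. by rewrite innerZl; congr (_ * _); apply/eqP; rewrite eq_complex /= oppr0 !eqxx. Qed.

Lemma innerNl x y : inner (- x) y = - inner x y.
Proof. by rewrite inner_conjC innerNr rmorphN /= -inner_conjC. Qed.

Lemma inner0l y : inner 0 y = 0.
Proof. by rewrite inner_conjC inner0r conjc0. Qed.

Lemma Re_innerC x y : Re (inner y x) = Re (inner x y).
Proof. by rewrite inner_conjC Re_conj. Qed.

Lemma Im_innerC x y : Im (inner y x) = - Im (inner x y).
Proof. by rewrite inner_conjC Im_conj. Qed.

Lemma Im_inner_eq0 x y : inner y x = inner x y -> Im (inner x y) = 0.
Proof. by move=> e; have := Im_innerC x y; rewrite e; lra. Qed.

Lemma inner_self x : inner x x = (hn x ^+ 2)%:C.
Proof.
rewrite /h_hnorm; have := inner_self_ge0 x.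
by case: (inner x x) => a b; rewrite lecE /= => /andP[/eqP-> a0]; rewrite sqr_sqrtr.
Qed.

Lemma hnorm_ge0 x : 0 <= hn x. Proof. exact: sqrtr_ge0. Qed.

Lemma hnorm_sqr x : hn x ^+ 2 = Re (inner x x). Proof. by rewrite inner_self. Qed.

Lemma hnorm_eq0 x : hn x = 0 -> x = 0.
Proof. by move=> hx; apply: inner_self_eq0; rewrite inner_self hx expr0n. Qed.

Lemma hnorm_gt0 x : x != 0 -> 0 < hn x.
Proof. by move=> x0; rewrite lt_def hnorm_ge0 andbT; apply: contraNN x0 => /eqP/hnorm_eq0->. Qed.

Lemma hnorm0 : hn 0 = 0.
Proof. by rewrite /h_hnorm inner0l sqrtr0. Qed.

Lemma hnormZ c x : hn (c *: x) = Num.sqrt (Re c ^+ 2 + Im c ^+ 2) * hn x.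
Proof.
rewrite {1}/h_hnorm innerZl innerZr mulrA conjcM_self inner_self -rmorphM /=.
by rewrite sqrtrM ?addr_ge0 ?sqr_ge0 // sqrtr_sqr ger0_norm ?hnorm_ge0.
Qed.

Lemma hnormZr (r : R) x : hn (r%:C *: x) = `|r| * hn x.
Proof. by rewrite hnormZ /= expr0n addr0 sqrtr_sqr. Qed.

Lemma hnormN x : hn (- x) = hn x.
Proof. by rewrite -scaleN1r hnormZ /= sqrrN expr1n oppr0 expr0n addr0 sqrtr1 mul1r. Qed.

Lemma hnormZi x : hn ('i *: x) = hn x.
Proof. by rewrite hnormZ /= expr0n expr1n add0r sqrtr1 mul1r. Qed.

Lemma hnormD_sqr x y : hn (x + y) ^+ 2 = hn x ^+ 2 + hn y ^+ 2 + 2 * Re (inner x y).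
Proof. rewrite !hnorm_sqr innerDl !innerDr !ReD (Re_innerC x y); lra. Qed.

Lemma Re_inner_le x y : Re (inner x y) <= hn x * hn y.
Proof.
have [->|x0] := eqVneq x 0; first by rewrite inner0l hnorm0 mul0r.
have [->|y0] := eqVneq y 0; first by rewrite inner0r hnorm0 mulr0.
have := sqr_ge0 (hn ((hn y)%:C *: x - (hn x)%:C *: y)).
rewrite hnormD_sqr hnormN !hnormZr !ger0_norm ?hnorm_ge0 // innerNr innerZl_real innerZr.
rewrite mulrA -rmorphM ReN Re_realM => h.
have xy0 : 0 < hn x * hn y by rewrite mulr_gt0 ?hnorm_gt0.
rewrite -(ler_pM2l xy0); nra.
Qed.

Lemma Im_inner_le x y : Im (inner x y) <= hn x * hn y.
Proof.
have := Re_inner_le x (- ('i *: y)).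
by rewrite innerNr innerZr hnormN hnormZi ReN Re_iM opprK.
Qed.

Lemma Im_inner_ge x y : - (hn x * hn y) <= Im (inner x y).
Proof. by have := Im_inner_le x (- y); rewrite innerNr hnormN ImN lerNl. Qed.

Lemma dense_translate (D : set H) v : h_dense inner D -> h_dense inner [set f + v | f in D].
Proof.
move=> dD x e e0; have [f [Df hf]] := dD (x - v) e e0.
by exists (f + v); split; [exists f | rewrite opprD addrA addrAC].
Qed.

Lemma dense_ge0_Im_quad (P : set H) u (K b : R) : 0 <= K -> h_dense inner P ->
  (forall y, P y -> 0 <= Im (inner y u) + K * hn y ^+ 2 + b) ->
  forall x, 0 <= Im (inner x u) + K * hn x ^+ 2 + b.
Proof.
move=> K0 dP Pge x; rewrite leNgt; apply/negP => neg.
have [d dE] : {d | d = - (Im (inner x u) + K * hn x ^+ 2 + b)} by eexists.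
(* Within distance r < 1 of x the functional exceeds its value -d at x by at
   most r C, so a point of P closer to x than d / (C + d) contradicts Pge. *)
set C := hn u + K * (2 * hn x + 1) + 1.
have C0 : 0 < C by have := hnorm_ge0 u; have := hnorm_ge0 x; rewrite /C; nra.
have d0 : 0 < d by rewrite dE; lra.
have [y [Py xy]] := dP x (d / (C + d)) (divr_gt0 d0 (addr_gt0 C0 d0)).
set r := hn (y - x).
have r_small : r * (C + d) < d.
  by rewrite -ltr_pdivlMr ?(addr_gt0 C0 d0) // /r -hnormN opprB.
have r0 : 0 <= r := hnorm_ge0 _.
have r1 : r < 1 by nra.
have cross : K * Re (inner (y - x) x) <= K * (r * hn x).
  by apply: ler_wpM2l => //; exact: Re_inner_le.
have quad : K * r ^+ 2 <= K * r by apply: ler_wpM2l => //; nra.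
have rC : r * C = r * hn u + 2 * (K * (r * hn x)) + K * r + r by rewrite /C; ring.
have rd : 0 <= r * d by rewrite mulr_ge0 // ltW.
have := Pge y Py; rewrite -(subrK x y) innerDl ImD hnormD_sqr -/r.
have := Im_inner_le (y - x) u; rewrite -/r; lra.
Qed.

Lemma dense_Im_quad_eq0 (P : set H) u (K : R) : h_dense inner P ->
  (forall y, P y -> 0 <= Im (inner y u) + K * hn y ^+ 2) -> u = 0.
Proof.
move=> dP Pge; apply: hnorm_eq0.
have Pge' y : P y -> 0 <= Im (inner y u) + `|K| * hn y ^+ 2 + 0.
  move=> Py; have := Pge y Py; have := ler_norm K; have := sqr_ge0 (hn y); nra.
(* At x = i t u the term Im<x, u> = -t ‖u‖^2 beats |K| t^2 ‖u‖^2. *)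
set t := (`|K| + 1)^-1.
have t0 : 0 < t by rewrite invr_gt0 ltr_pwDr ?normr_ge0.
have := dense_ge0_Im_quad (normr_ge0 K) dP Pge' ((t *i) *: u).
rewrite innerZl inner_self hnormZ /= mul0r add0r expr0n add0r sqrtr_sqr.
rewrite (gtr0_norm t0) addr0 exprMn mulrA => ge0.
have Kt : `|K| * t = 1 - t by rewrite /t; field; rewrite lt0r_neq0 // ltr_pwDr ?normr_ge0.
have : t ^+ 2 * hn u ^+ 2 <= 0 by nra.
rewrite pmulr_rle0 ?exprn_gt0 // => u2; apply/eqP.
by rewrite -sqrf_eq0 eq_le u2 sqr_ge0.
Qed.

Lemma Im_inner_addiZ x y z : Im (inner x (y + 'i *: z)) = Im (inner x y) + Re (inner x z).
Proof. by rewrite innerDr innerZr ImD Im_iM. Qed.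

Lemma bounded_op_Re_le (W : H -> H) : h_bounded_op inner W ->
  exists2 K : R, 0 <= K & forall x, Re (inner x (W x)) <= K * hn x ^+ 2.
Proof.
case=> _ [M hM]; exists `|M| => // x.
have := Re_inner_le x (W x); have := hM x; have := ler_norm M.
have := hnorm_ge0 x; have := hnorm_ge0 (W x); nra.
Qed.

Lemma op_ge_Re (W : H -> H) (c : R) x : h_op_ge inner W c -> c * hn x ^+ 2 <= Re (inner x (W x)).
Proof. by move=> /(_ x); rewrite lecE => /andP[]. Qed.

Lemma opnorm_on_le (Vs : set H) (L : H -> H) v : h_subspace Vs -> h_linear_on Vs L ->
  h_bounded_on inner Vs L -> Vs v -> hn (L v) <= h_opnorm_on inner Vs L * hn v.
Proof.
move=> hVs hL [M hM] Vv.
have [->|v0] := eqVneq v 0; first by rewrite (linear_on0 hVs hL) hnorm0 mulr0.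
have nv := hnorm_gt0 v0.
have has_supE : has_sup [set hn (L w) | w in [set w | Vs w /\ hn w <= 1]].
  split; first by exists (hn (L 0)), 0; rewrite //= hnorm0; split; [case: hVs | ].
  exists `|M| => _ [w [Vw w1] <-]; have := hM w Vw; have := ler_norm M.
  have := hnorm_ge0 w; have := normr_ge0 M; nra.
set w := (hn v)^-1%:C *: v.
have hw : hn w = 1 by rewrite hnormZr ger0_norm ?invr_ge0 ?hnorm_ge0 // mulVf ?gt_eqF.
have Ew : [set hn (L w) | w in [set w | Vs w /\ hn w <= 1]] (hn (L w)).
  by exists w => //; split; [exact: subspaceZ | rewrite hw].
have := sup_upper_bound has_supE Ew.
rewrite (linear_onZ _ hVs hL Vv) hnormZr ger0_norm ?invr_ge0 ?hnorm_ge0 //.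
by rewrite mulrC ler_pdivrMr.
Qed.

End InnerProduct.

Section Adjoint.
Variables (R : realType) (H : lmodType R[i]) (inner : H -> H -> R[i]).
Hypothesis hilbert : h_is_hilbert inner.
Variables (DS : set H) (S : H -> H).
Hypotheses (hdense : h_dense inner DS) (hsym : h_symmetric inner DS S).
Local Notation A := (h_adj inner DS S).
Local Notation adj_dom := (h_adj_dom inner DS S).

Lemma adjE g h : (forall f, DS f -> inner g (S f) = inner h f) -> A g = h.
Proof.
move=> gh; apply: xget_unique => // k gk; apply/eqP; rewrite -subr_eq0; apply/eqP.
(* k - h is orthogonal to the dense set DS. *)
apply: (dense_Im_quad_eq0 hilbert (K := 0) hdense) => f Df.
rewrite (Im_innerC hilbert) (innerDl hilbert) (innerNl hilbert) -gk // -gh // subrr.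
by rewrite mul0r addr0 /= oppr0.
Qed.

Lemma adjP g : adj_dom g -> forall f, DS f -> inner g (S f) = inner (A g) f.
Proof. by move=> gdom; apply: (xgetPex 0 gdom). Qed.

Lemma adjD_sym f v : DS f -> adj_dom v -> A (f + v) = S f + A v.
Proof.
move=> Df vdom; apply: adjE => g Dg.
by rewrite !(innerDl hilbert) hsym // (adjP vdom Dg).
Qed.

Lemma Im_inner_adj_add f v u : DS f -> adj_dom v ->
  Im (inner (f + v) (A (f + v) + u)) = Im (inner v (A v)) + Im (inner (f + v) u).
Proof.
move=> Df vdom; rewrite adjD_sym // (innerDr hilbert) ImD; congr (_ + _).
rewrite (innerDl hilbert) !(innerDr hilbert) !ImD (adjP vdom Df).
by rewrite (Im_innerC hilbert f (A v)) (Im_inner_eq0 hilbert (hsym Df Df)); lra.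
Qed.

End Adjoint.

Section Corollary.
Variables (R : realType) (H : lmodType R[i]) (inner : H -> H -> R[i]).
Hypothesis hilbert : h_is_hilbert inner.
Variables (DS : set H) (S : H -> H) (Vs : set H).
Hypotheses (hDS : h_subspace DS) (hdense : h_dense inner DS).
Hypothesis hsym : h_symmetric inner DS S.
Hypotheses (hVs : h_subspace Vs) (hVadj : Vs `<=` h_adj_dom inner DS S).
Hypothesis hcap : Vs `&` DS = [set 0].
Local Notation hn := (h_hnorm inner).
Local Notation A := (h_adj inner DS S).
Local Notation D := (h_dsum DS Vs).
Local Notation S_V := (h_S_V inner DS S Vs).
Local Notation S_VL := (h_S_VL inner DS S Vs).

Lemma dsum_add f v : DS f -> Vs v -> D (f + v).
Proof. by move=> Df Vv; exists f, v. Qed.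

Lemma dsum_l f : DS f -> D f.
Proof. by move=> Df; rewrite -[f]addr0; apply: dsum_add => //; case: hVs. Qed.

Lemma dsum_r v : Vs v -> D v.
Proof. by move=> Vv; rewrite -[v]add0r; apply: dsum_add => //; case: hDS. Qed.

Lemma vpartE f v : DS f -> Vs v -> h_vpart DS Vs (f + v) = v.
Proof.
move=> Df Vv; apply: xget_unique; first by split; rewrite // addrK.
move=> w [Vw Dw]; apply/eqP; rewrite -subr_eq0; apply/eqP.
suff : (Vs `&` DS) (w - v) by rewrite hcap.
split; first exact: subspaceB.
by have := subspaceB hDS Df Dw; rewrite opprB opprD addrCA addNKr.
Qed.

Lemma S_VE x : S_V x = A x.
Proof. by rewrite /h_S_V /h_S_VL addr0. Qed.

Lemma S_VL_add L f v : DS f -> Vs v -> S_VL L (f + v) = A (f + v) + L v.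
Proof. by move=> Df Vv; rewrite /h_S_VL vpartE. Qed.

Lemma Im_S_V_eq0 v : h_symmetric inner D S_V -> Vs v -> Im (inner v (A v)) = 0.
Proof.
move=> hsymV Vv; have := hsymV v v (dsum_r Vv) (dsum_r Vv).
by rewrite S_VE => /(Im_inner_eq0 hilbert).
Qed.

Lemma adj_defect_eq0 (W : H -> H) v u (gamma : R) : h_bounded_op inner W -> Vs v ->
  Im (inner v (A v)) = 0 ->
  (forall f, DS f -> - gamma * hn (f + v) ^+ 2 <=
     Im (inner (f + v) (A (f + v) + u)) + Re (inner (f + v) (W (f + v)))) ->
  u = 0.
Proof.
move=> hW Vv Av0 lb; have [K K0 WK] := bounded_op_Re_le hilbert hW.
apply: (dense_Im_quad_eq0 hilbert (K := K + gamma) (dense_translate v hdense)).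
move=> _ [f Df <-]; have := lb f Df; have := WK (f + v).
by rewrite (Im_inner_adj_add hilbert hdense hsym _ Df (hVadj Vv)) Av0; lra.
Qed.

Lemma dissipative_ext_eq (V B : H -> H) : h_bounded_op inner V ->
  h_symmetric inner D S_V -> h_linear_on D B ->
  (forall f, DS f -> B f = h_plus_iV S V f) -> h_dissipative inner D B ->
  forall psi, D psi -> B psi = h_plus_iV S_V V psi.
Proof.
move=> hV hsymV hB BS Bdis _ [f [v [Df [Vv ->]]]].
set u := B v - (A v + 'i *: V v).
have Bv : B v = A v + 'i *: V v + u by rewrite /u addrC subrK.
clearbody u.
have BE g : DS g -> B (g + v) = A (g + v) + 'i *: V (g + v) + u.
  move=> Dg; rewrite (linear_onD hB (dsum_l Dg) (dsum_r Vv)) BS // Bv addrA.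
  rewrite (adjD_sym hilbert hdense hsym Dg (hVadj Vv)) (linear_onD (proj1 hV)) //.
  by rewrite /h_plus_iV scalerDr addrACA.
have u0 : u = 0.
  apply: (adj_defect_eq0 (gamma := 0) hV Vv (Im_S_V_eq0 hsymV Vv)) => g Dg.
  have := Bdis _ (dsum_add Dg Vv).
  by rewrite BE // addrAC (Im_inner_addiZ hilbert) oppr0 mul0r.
by rewrite BE // u0 addr0 /h_plus_iV S_VE.
Qed.

Lemma Im_S_VL_plus_iV_add (L W : H -> H) f v : DS f -> Vs v ->
  Im (inner (f + v) (h_plus_iV (S_VL L) W (f + v))) =
  Im (inner (f + v) (A (f + v) + L v)) + Re (inner (f + v) (W (f + v))).
Proof. by move=> Df Vv; rewrite /h_plus_iV (Im_inner_addiZ hilbert) S_VL_add. Qed.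

Lemma S_VL_plus_iV_unbounded_below (L W : H -> H) : h_bounded_op inner W ->
  h_symmetric inner D S_V -> (exists v, Vs v /\ L v <> 0) ->
  ~ exists gamma : R, 0 < gamma /\ forall psi, D psi ->
      - gamma * hn psi ^+ 2 <= Im (inner psi (h_plus_iV (S_VL L) W psi)).
Proof.
move=> hW hsymV [v [Vv Lv0]] [gamma [_ lb]]; apply: Lv0.
apply: (adj_defect_eq0 (gamma := gamma) hW Vv (Im_S_V_eq0 hsymV Vv)) => f Df.
by have := lb _ (dsum_add Df Vv); rewrite Im_S_VL_plus_iV_add.
Qed.

Lemma S_VL_plus_iV_not_dissipative (L W : H -> H) v : h_bounded_op inner W -> Vs v ->
  Im (inner v (S_V v)) < 0 -> ~ h_dissipative inner D (h_plus_iV (S_VL L) W).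
Proof.
move=> hW Vv; rewrite S_VE => Av_neg Bdis.
have [K K0 WK] := bounded_op_Re_le hilbert hW.
suff : 0 <= Im (inner 0 (L v)) + K * hn 0 ^+ 2 + Im (inner v (A v)).
  by rewrite (inner0l hilbert) (hnorm0 hilbert); lra.
apply: (dense_ge0_Im_quad hilbert K0 (dense_translate v hdense)) => _ [f Df <-].
have := Bdis _ (dsum_add Df Vv); have := WK (f + v).
by rewrite Im_S_VL_plus_iV_add // (Im_inner_adj_add hilbert hdense hsym _ Df (hVadj Vv)); lra.
Qed.

Lemma Im_S_VL_ge (L : H -> H) (eps : R) : h_linear_on Vs L -> 0 < eps ->
  (forall v, Vs v -> eps * hn v ^+ 2 <= Im (inner v (S_V v))) -> h_bounded_on inner Vs L ->
  forall psi, D psi ->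
    - (h_opnorm_on inner Vs L ^+ 2 / (4 * eps)) * hn psi ^+ 2 <= Im (inner psi (S_VL L psi)).
Proof.
move=> hL eps0 coercive hLb _ [f [v [Df [Vv ->]]]].
rewrite S_VL_add // (Im_inner_adj_add hilbert hdense hsym _ Df (hVadj Vv)).
have := coercive v Vv; rewrite S_VE.
have := Im_inner_ge hilbert (f + v) (L v).
set l := h_opnorm_on inner Vs L; set p := hn (f + v); set y := hn v.
have Lv_le : p * hn (L v) <= p * (l * y).
  by rewrite ler_wpM2l ?hnorm_ge0 ?(opnorm_on_le hilbert hVs hL hLb Vv).
have square : 0 <= (2 * eps * y - l * p) ^+ 2 / (4 * eps) by rewrite divr_ge0 ?sqr_ge0 //; lra.
have expand : (2 * eps * y - l * p) ^+ 2 / (4 * eps) =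
    eps * y ^+ 2 - p * (l * y) + l ^+ 2 / (4 * eps) * p ^+ 2 by field; lra.
lra.
Qed.

Lemma S_VL_plus_iV_dissipative (L W : H -> H) (eps : R) : h_linear_on Vs L -> 0 < eps ->
  (forall v, Vs v -> eps * hn v ^+ 2 <= Im (inner v (S_V v))) -> h_bounded_on inner Vs L ->
  h_op_ge inner W (h_opnorm_on inner Vs L ^+ 2 / (4 * eps)) ->
  h_dissipative inner D (h_plus_iV (S_VL L) W).
Proof.
move=> hL eps0 coercive hLb hW psi Dpsi.
have := Im_S_VL_ge hL eps0 coercive hLb Dpsi; have := op_ge_Re psi hW.
by rewrite /h_plus_iV (Im_inner_addiZ hilbert); lra.
Qed.

End Corollary.

Theorem corollary6p5 (R : realType) (H : lmodType R[i]) (inner : H -> H -> R[i])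
  (DS : set H) (S : H -> H) (V : H -> H) (Vs : set H) (L : H -> H) :
  h_is_hilbert inner ->
  h_densely_defined inner DS S -> h_symmetric inner DS S ->
  h_bounded_op inner V -> h_op_ge inner V 0 ->
  h_subspace Vs -> Vs `<=` h_adj_dom inner DS S -> Vs `&` DS = [set 0] ->
  h_linear_on Vs L ->
  let D := h_dsum DS Vs in
  (* (i) *)
  (h_symmetric inner D (h_S_V inner DS S Vs) ->
     (forall B : H -> H,
        h_linear_on D B ->
        (forall f, DS f -> B f = h_plus_iV S V f) ->
        h_dissipative inner D B ->
        forall psi, D psi -> B psi = h_plus_iV (h_S_V inner DS S Vs) V psi)
     /\ ((exists v, Vs v /\ L v <> 0) ->
         ~ exists gamma : R, 0 < gamma /\
             forall psi, D psi ->
               - gamma * h_hnorm inner psi ^+ 2 <=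
               complex.Im (inner psi (h_plus_iV (h_S_VL inner DS S Vs L) V psi))))
  /\
  (* (ii) *)
  ((exists v, Vs v /\ complex.Im (inner v (h_S_V inner DS S Vs v)) < 0) ->
     forall (L' : H -> H) (V' : H -> H),
       h_linear_on Vs L' -> h_bounded_op inner V' -> h_op_ge inner V' 0 ->
       ~ h_dissipative inner D (h_plus_iV (h_S_VL inner DS S Vs L') V'))
  /\
  (* (iii) *)
  (forall eps : R, 0 < eps ->
     (forall v, Vs v -> eps * h_hnorm inner v ^+ 2 <= complex.Im (inner v (h_S_V inner DS S Vs v))) ->
     h_bounded_on inner Vs L ->
     (forall psi, D psi ->
        - (h_opnorm_on inner Vs L ^+ 2 / (4 * eps)) * h_hnorm inner psi ^+ 2 <=
        complex.Im (inner psi (h_S_VL inner DS S Vs L psi)))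
     /\ (forall W : H -> H, h_bounded_op inner W ->
           h_op_ge inner W (h_opnorm_on inner Vs L ^+ 2 / (4 * eps)) ->
           forall psi, D psi ->
             0 <= complex.Im (inner psi (h_plus_iV (h_S_VL inner DS S Vs L) W psi)))).
Proof.
move=> hil [hDS _ hdense] hsym hV _ hVs hVadj hcap hL D.
split; [move=> hsymV; split | split].
- move=> B; exact: (dissipative_ext_eq hil hDS hdense hsym hVs hVadj hV hsymV).
- exact: (S_VL_plus_iV_unbounded_below hil hDS hdense hsym hVs hVadj hcap hV hsymV).
- move=> [v [Vv Av_neg]] L' V' _ hV' _.
  exact: (S_VL_plus_iV_not_dissipative hil hDS hdense hsym hVs hVadj hcap hV' Vv Av_neg).
- move=> eps eps0 coercive hLb; split.
    exact: (Im_S_VL_ge hil hDS hdense hsym hVs hVadj hcap hL eps0 coercive hLb).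
  move=> W _ hW.
  exact: (S_VL_plus_iV_dissipative hil hDS hdense hsym hVs hVadj hcap hL eps0 coercive hLb hW).
Qed.
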